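(* Let $L$ be a matroid on a finite set $S\cup T$ with $S\cap T=\emptyset$. Then $L = L|S\mathbin{\Box} L/S$ (where $L|S$ is the restriction of $L$ to $S$ and $L/S$ is the contraction of $S$, a matroid on $T$) if and only if $S$ is a free separator of $L$.
   Context: For a matroid $M$ on a finite set $S$ write $\rho_M$ for its rank function, $\rho(M)=\rho_M(S)$, $\nu_M(A)=|A|-\rho_M(A)$ and $\lambda_M(A)=\rho(M)-\rho_M(A)$. For matroids $M$ on $S$ and $N$ on $T$ with $S\cap T=\emptyset$, the free product $M\mathbin{\Box} N$ is the matroid on $S\cup T$ whose independent sets are those $A\subseteq S\cup T$ such that $A\cap S$ is independent in $M$ and $\lambda_M(A\cap S)\geq \nu_N(A\cap T)$. A cyclic flat of a matroid is a flat that is a union of circuits. A subset $A$ of the ground set of a matroid $M$ is a free separator of $M$ if every cyclic flat of $M$ is comparable to $A$ by inclusion. *)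

From mathcomp Require Import all_boot.
Set Implicit Arguments. Unset Strict Implicit. Unset Printing Implicit Defensive.

(* A matroid on the finite ground set G : {set E} (E a finType) is given by
   its rank function r, of which only the values on subsets of G matter. *)
Definition is_matroid (E : finType) (G : {set E}) (r : {set E} -> nat) : Prop :=
  [/\ forall A : {set E}, A \subset G -> r A <= #|A|,
      forall A B : {set E}, A \subset B -> B \subset G -> r A <= r B &
      forall A B : {set E}, A \subset G -> B \subset G ->
        r (A :|: B) + r (A :&: B) <= r A + r B].

Section Matroids.
Variable E : finType.
Implicit Types (G S T A B C F : {set E}) (r : {set E} -> nat).

Definition indep r A : bool := r A == #|A|.

Definition nu r A : nat := #|A| - r A.
Definition lambda G r A : nat := r G - r A.

(* restriction L|S: same rank function, ground set S.
   contraction L/S: rank A |-> r (A u S) - r S, ground set G \ S. *)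
Definition restr_rank r (S : {set E}) : {set E} -> nat := r.
Definition contr_rank r S : {set E} -> nat := fun A => r (A :|: S) - r S.

Definition freeprod_indep SM rM SN rN A : bool :=
  [&& A \subset SM :|: SN, indep rM (A :&: SM) &
      nu rN (A :&: SN) <= lambda SM rM (A :&: SM)].

Definition eq_freeprod G r SM rM SN rN : Prop :=
  G = SM :|: SN /\ forall A : {set E}, A \subset G -> indep r A = freeprod_indep SM rM SN rN A.

Definition circuit G r C : Prop :=
  [/\ C \subset G, ~~ indep r C & forall D : {set E}, D \proper C -> indep r D].

Definition flat G r F : Prop :=
  F \subset G /\ forall x : E, x \in G -> x \notin F -> r F < r (x |: F).

Definition cyclic G r F : Prop :=
  F \subset G /\ forall x : E, x \in F -> exists C : {set E}, [/\ circuit G r C, x \in C & C \subset F].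

Definition cyclic_flat G r F : Prop := flat G r F /\ cyclic G r F.

Definition free_separator G r A : Prop :=
  A \subset G /\
  forall F : {set E}, cyclic_flat G r F -> F \subset A \/ A \subset F.

End Matroids.

From mathcomp Require Import all_boot zify.
Set Implicit Arguments. Unset Strict Implicit. Unset Printing Implicit Defensive.

(* For A with A ∩ S independent, A is independent in L|S □ L/S exactly when
   |A| <= r(A ∪ S); independence in L always implies this.  So L = L|S □ L/S
   means that every such A is independent in L.  If S is a free separator and
   A contains a circuit C, then the cyclic flat cl(C) cannot lie inside S, so
   it contains S, and r(A ∪ S) = r(A) < |A|.  Conversely, a cyclic flat F
   incomparable with S yields an f ∈ F \ S and a basis B of F avoiding f;
   adding s ∈ S \ F raises the rank of B, so f + B satisfies the criterion
   while being dependent. *)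

Section MatroidRank.
Variables (E : finType) (G : {set E}) (r : {set E} -> nat).
Hypothesis hM : is_matroid G r.
Implicit Types (A B C F X Y Z : {set E}).

Lemma rank_le_card A : A \subset G -> r A <= #|A|.
Proof. by case: hM => + _ _; apply. Qed.

Lemma rank_mono A B : A \subset B -> B \subset G -> r A <= r B.
Proof. by case: hM => _ + _; apply. Qed.

Lemma rank_submod A B :
  A \subset G -> B \subset G -> r (A :|: B) + r (A :&: B) <= r A + r B.
Proof. by case: hM => _ _; apply. Qed.

Lemma rank_subadd A B : A \subset G -> B \subset G -> r (A :|: B) <= r A + r B.
Proof. by move=> sAG sBG; have := rank_submod sAG sBG; lia. Qed.

Lemma indep0 : indep r set0.
Proof. by have := rank_le_card (sub0set G); rewrite /indep cards0 leqn0. Qed.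

Lemma indep_subset A B : A \subset B -> B \subset G -> indep r B -> indep r A.
Proof.
move=> sAB sBG /eqP rB; have sAG := subset_trans sAB sBG.
have sDG : B :\: A \subset G := subset_trans (subsetDl B A) sBG.
have eB : A :|: B :\: A = B by rewrite -{1}(setIidPr sAB) setID.
have := rank_subadd sAG sDG; rewrite eB rB.
have := cardsID A B; rewrite (setIidPr sAB).
by have := rank_le_card sAG; have := rank_le_card sDG; rewrite /indep; lia.
Qed.

Lemma dependent_has_circuit A :
  A \subset G -> ~~ indep r A -> exists2 C, circuit G r C & C \subset A.
Proof.
move=> sAG dA.
have [C minC sCA] := @minset_exists _ [pred D | ~~ indep r D] A dA.
exists C => //; split; [exact: subset_trans sCA sAG | exact: minsetp minC |].
move=> D ltDC; apply: contraT => dD.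
by move: (ltDC); rewrite (minsetinf minC dD (proper_sub ltDC)) properxx.
Qed.

Lemma circuit_through X x :
  X \subset G -> ~~ indep r X -> indep r (X :\ x) ->
  exists C, [/\ circuit G r C, x \in C & C \subset X].
Proof.
move=> sXG dX iXx; have [C cC sCX] := dependent_has_circuit sXG dX.
have [_ dC _] := cC; exists C; split=> //; apply: contraR dC => xNC.
apply: indep_subset iXx; last exact: subset_trans (subsetDl _ _) sXG.
by rewrite subsetD1 sCX.
Qed.

Lemma rankU_eq_superset X Y Z :
  X \subset Z -> Z \subset G -> Y \subset G ->
  r (X :|: Y) = r X -> r (Z :|: Y) = r Z.
Proof.
move=> sXZ sZG sYG rXY; have sXG := subset_trans sXZ sZG.
have sXYG : X :|: Y \subset G by rewrite subUset sXG.
have := rank_submod sXYG sZG.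
rewrite -setUA (setUC Y) setUA (setUidPr sXZ) rXY.
have := rank_mono (_ : X \subset (X :|: Y) :&: Z) (subset_trans (subsetIr _ _) sZG).
rewrite subsetI subsetUl sXZ => /(_ isT).
by have := rank_mono (subsetUl Z Y) (_ : Z :|: Y \subset G); rewrite subUset sZG sYG; lia.
Qed.

Lemma rankU_spanned X Y :
  X \subset G -> Y \subset G -> {in Y, forall y, r (y |: X) = r X} ->
  r (X :|: Y) = r X.
Proof.
move=> sXG; have [n] := ubnP #|Y|; elim: n Y => // n IH Y ltYn sYG spanY.
have [->|[y yY]] := set_0Vmem Y; first by rewrite setU0.
have sY'Y : Y :\ y \subset Y := subsetDl _ _.
have rXY' : r (X :|: Y :\ y) = r X.
  apply: IH (subset_trans sY'Y sYG) (sub_in1 (subsetP sY'Y) spanY).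
  by move: ltYn; rewrite (cardsD1 y) yY.
rewrite -(setD1K yY) setUCA setUC -rXY'.
apply: (rankU_eq_superset (subsetUl X _)).
- by rewrite subUset sXG (subset_trans sY'Y sYG).
- by rewrite sub1set (subsetP sYG).
- by rewrite setUC spanY.
Qed.

Definition cl X := [set x in G | r (x |: X) == r X].

Lemma cl_subset X : cl X \subset G.
Proof. by apply/subsetP=> x; rewrite inE => /andP[]. Qed.

Lemma subset_cl X : X \subset G -> X \subset cl X.
Proof.
by move=> sXG; apply/subsetP=> x xX; rewrite inE (subsetP sXG) //= (setUidPr _) ?sub1set.
Qed.

Lemma rank_cl X : X \subset G -> r (cl X) = r X.
Proof.
move=> sXG; rewrite -(setUidPr (subset_cl sXG)) rankU_spanned ?cl_subset //.
by move=> y; rewrite inE => /andP[_ /eqP].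
Qed.

Lemma flat_cl X : X \subset G -> flat G r (cl X).
Proof.
move=> sXG; split=> [|x xG]; first exact: cl_subset.
rewrite rank_cl // inE xG ltnNge; apply: contra => le_xcl.
have sxG : x |: cl X \subset G by rewrite subUset sub1set xG cl_subset.
have := rank_mono (setUS [set x] (subset_cl sXG)) sxG.
have := rank_mono (subsetUr [set x] X) (subset_trans (setUS _ (subset_cl sXG)) sxG).
by rewrite eqn_leq; lia.
Qed.

(* Each y in cl(C) \ C lies in a circuit inside y + (C - c), for any c in C. *)
Lemma cyclic_cl_circuit C : circuit G r C -> cyclic G r (cl C).
Proof.
move=> cC; have [sCG dC minC] := cC; split=> [|y]; first exact: cl_subset.
rewrite inE => /andP[yG /eqP ryC].
have [yC|yNC] := boolP (y \in C); first by exists C; split=> //; apply: subset_cl.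
have [c cinC] : exists c, c \in C.
  by apply/set0Pn; apply: contraNneq dC => ->; apply: indep0.
set X := (y |: C) :\ c.
have syCG : y |: C \subset G by rewrite subUset sub1set yG.
have sXG : X \subset G := subset_trans (subsetDl _ _) syCG.
have eXy : X :\ y = C :\ c.
  by apply/setP=> z; rewrite !inE; case: eqVneq => // ->; rewrite (negbTE yNC) andbF.
have cardX : #|X| = #|C|.
  by have := cardsD1 c (y |: C); rewrite in_setU1 cinC orbT cardsU1 yNC -/X => -[].
have dX : ~~ indep r X.
  have := rank_mono (subsetDl (y |: C) [set c]) syCG; rewrite -/X.
  by move: dC; rewrite /indep cardX ryC; have := rank_le_card sCG; lia.
have iXy : indep r (X :\ y) by rewrite eXy minC // properD1.
have [D [cD yD sDX]] := circuit_through sXG dX iXy.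
exists D; split=> //; apply: subset_trans sDX (subset_trans (subsetDl _ _) _).
by rewrite subUset subset_cl // sub1set inE yG ryC eqxx.
Qed.

Lemma basis_extend X Y :
  X \subset Y -> Y \subset G -> indep r X ->
  exists2 B : {set E}, X \subset B & [/\ B \subset Y, indep r B & r B = r Y].
Proof.
move=> sXY sYG iX; pose P := [pred D : {set E} | (D \subset Y) && indep r D].
have PX : P X by rewrite /= sXY iX.
have [B maxB sXB] := maxset_exists PX.
have /andP[sBY /eqP iB] := maxsetp maxB; have sBG := subset_trans sBY sYG.
exists B => //; split=> //; first exact/eqP.
rewrite -(setUidPr sBY) rankU_spanned // => y yY.
have syBG : y |: B \subset G by rewrite subUset sub1set (subsetP sYG).
have [yB|yNB] := boolP (y \in B); first by rewrite (setUidPr _) ?sub1set.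
have dyB : ~~ indep r (y |: B).
  apply: contra yNB => iyB.
  have PyB : P (y |: B) by rewrite /= subUset sub1set yY sBY.
  by rewrite -(maxsetsup maxB PyB (subsetUr _ _)) setU11.
have := rank_le_card syBG; have := rank_mono (subsetUr [set y] B) syBG.
by move: dyB; rewrite /indep cardsU1 yNB; lia.
Qed.

Lemma flat_rank_extend F B x :
  flat G r F -> B \subset F -> r B = r F -> x \in G -> x \notin F ->
  r B < r (x |: B).
Proof.
move=> [sFG ltF] sBF rB xG xNF; have sBG := subset_trans sBF sFG.
have sxG : [set x] \subset G by rewrite sub1set.
rewrite ltnNge; apply/negP => le_xB.
have rBx : r (B :|: [set x]) = r B.
  by apply/eqP; rewrite eqn_leq setUC le_xB rank_mono ?subsetUr // subUset sxG.
have := ltF x xG xNF; rewrite setUC (rankU_eq_superset sBF sFG sxG rBx); lia.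
Qed.

Section FreeSeparator.
Variable S : {set E}.
Hypothesis sSG : S \subset G.

Lemma free_separator_indep A :
  free_separator G r S -> A \subset G -> indep r (A :&: S) ->
  #|A| <= r (A :|: S) -> indep r A.
Proof.
move=> [_ sepS] sAG iAS le_AS; apply: contraT => dA.
have [C cC sCA] := dependent_has_circuit sAG dA; have [sCG dC _] := cC.
have [sclS|sScl] := sepS _ (conj (flat_cl sCG) (cyclic_cl_circuit cC)).
  have sCAS : C \subset A :&: S by rewrite subsetI sCA (subset_trans (subset_cl sCG)).
  by move: dC; rewrite (indep_subset sCAS (subset_trans (subsetIl _ _) sAG) iAS).
have rCS : r (C :|: S) = r C.
  have sCScl : C :|: S \subset cl C by rewrite subUset subset_cl.
  apply/eqP; rewrite eqn_leq -{1}(rank_cl sCG) rank_mono ?cl_subset //=.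
  by rewrite rank_mono ?subsetUl // subUset sCG.
have := rankU_eq_superset sCA sAG sSG rCS.
by move: dA; rewrite /indep; have := rank_le_card sAG; lia.
Qed.

Lemma indep_free_separator :
  (forall A, A \subset G -> indep r (A :&: S) -> #|A| <= r (A :|: S) -> indep r A) ->
  free_separator G r S.
Proof.
move=> indepS; split=> // F [flatF [_ cycF]]; have [sFG _] := flatF.
have [sFS|/subsetPn[f fF fNS]] := boolP (F \subset S); first by left.
have [sSF|/subsetPn[s sS sNF]] := boolP (S \subset F); first by right.
have [C [[_ dC minC] fC sCF]] := cycF f fF.
have [B sCB [sBF iB rB]] :=
  basis_extend (subset_trans (subsetDl C _) sCF) sFG (minC _ (properD1 fC)).
have sBG := subset_trans sBF sFG.
have fNB : f \notin B.
  apply: contra dC => fB; apply: (indep_subset _ sBG iB).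
  by rewrite -(setD1K fC) subUset sub1set fB.
have sIF : f |: B \subset F by rewrite subUset sub1set fF.
have sIG := subset_trans sIF sFG.
have iIS : indep r ((f |: B) :&: S).
  apply: (indep_subset _ sBG iB); apply/subsetP=> z; rewrite !inE.
  by case: eqVneq => [->|_] /=; [rewrite (negbTE fNS) | case/andP].
have iI : indep r (f |: B).
  apply: (indepS _ sIG iIS); rewrite cardsU1 fNB add1n -(eqP iB).
  apply: leq_trans (flat_rank_extend flatF sBF rB (subsetP sSG s sS) sNF) _.
  apply: rank_mono; last by rewrite subUset sIG.
  by rewrite subUset sub1set !inE sS !orbT /= (subset_trans (subsetUr [set f] B) (subsetUl _ S)).
exfalso; have := rank_mono sIF sFG; move: iI iB; rewrite /indep cardsU1 fNB rB add1n.
by move=> /eqP -> /eqP ->; rewrite ltnn.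
Qed.

End FreeSeparator.
End MatroidRank.

Section FreeProduct.
Variables (E : finType) (S T : {set E}) (r : {set E} -> nat).
Hypotheses (hM : is_matroid (S :|: T) r) (dST : [disjoint S & T]).
Implicit Type A : {set E}.

Lemma freeprod_indepE A :
  A \subset S :|: T ->
  freeprod_indep S (restr_rank r S) T (contr_rank r S) A =
  indep r (A :&: S) && (#|A| <= r (A :|: S)).
Proof.
move=> sAG; rewrite /freeprod_indep sAG /=; case: (boolP (indep r _)) => //= /eqP rAS.
have eADS : A :\: S = A :&: T.
  apply/setP=> x; rewrite !inE andbC; case xA: (x \in A) => //=.
  have := subsetP sAG x xA; rewrite inE.
  by case xS: (x \in S) => /= xT; rewrite ?(disjointFr dST xS) ?xT.
have eATS : A :&: T :|: S = A :|: S.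
  by apply/setP=> x; rewrite -eADS !inE; case: (x \in S); rewrite ?orbT ?orbF ?andbT.
have cardA : #|A| = #|A :&: S| + #|A :&: T| by rewrite -eADS cardsID.
have sATG : A :&: T \subset S :|: T := subset_trans (subsetIl _ _) sAG.
have sSG := subsetUl S T.
have sAUS : A :|: S \subset S :|: T by rewrite subUset sAG.
have := rank_mono hM (subsetUr A S) sAUS; have := rank_mono hM (subsetIr A S) sSG.
have := rank_le_card hM sATG; have := rank_subadd hM sATG sSG.
by rewrite /nu /lambda /contr_rank /restr_rank eATS; lia.
Qed.

Lemma eq_freeprodP :
  eq_freeprod (S :|: T) r S (restr_rank r S) T (contr_rank r S) <->
  (forall A, A \subset S :|: T -> indep r (A :&: S) -> #|A| <= r (A :|: S) ->
     indep r A).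
Proof.
split=> [[_ eqI] A sAG iAS le_AS | indepS]; first by rewrite eqI // freeprod_indepE // iAS.
split=> // A sAG; rewrite freeprod_indepE //; apply/idP/idP => [iA|/andP[]].
  rewrite (indep_subset hM (subsetIl A S) sAG iA) /=; move/eqP: iA => <-.
  by rewrite (rank_mono hM) ?subsetUl // subUset sAG subsetUl.
exact: indepS.
Qed.

End FreeProduct.

Theorem theorem6p3 (E : finType) (S T : {set E}) (r : {set E} -> nat) :
  is_matroid (S :|: T) r ->
  [disjoint S & T] ->
  eq_freeprod (S :|: T) r S (restr_rank r S) T (contr_rank r S)
  <-> free_separator (S :|: T) r S.
Proof.
move=> hM dST; rewrite eq_freeprodP //; split.
  exact: (indep_free_separator hM (subsetUl S T)).
by move=> sepS A; apply: (free_separator_indep hM (subsetUl S T)).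
Qed.
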